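(* Let $n\in\mathbb{N}$ and $r>1$. Let $S'\subset\mathbb{R}^n$ be an $n$-simplex with $B(u,1/r)\subset S'\subset B(u,r)$ for some $u\in\mathbb{R}^n$. Let $F$ be a facet of $S'$ with supporting hyperplane $H$, and let $H^+,H^-$ be the two closed half-spaces determined by $H$, with $S'\subset H^+$ and $H^-$ disjoint from the interior of $S'$. Then there exists $v\in F$ such that $$B(v,1/r)\cap H^+\subset S'\qquad\text{and}\qquad B(v,1/r)\cap H\subset F\subset B(v,2r)\cap H.$$
   Context: $B(p,r)$ denotes the open Euclidean ball of radius $r$ centered at $p$. *)

From HB Require Import structures.
From mathcomp Require Import all_boot all_order all_algebra.
From mathcomp Require Import boolp classical_sets reals.
Set Implicit Arguments. Unset Strict Implicit. Unset Printing Implicit Defensive.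
Import Order.TTheory GRing.Theory Num.Theory.
Local Open Scope ring_scope.
Local Open Scope classical_set_scope.

Definition edot (R : realType) (n : nat) (x y : 'rV[R]_n) : R :=
  \sum_(i < n) x ord0 i * y ord0 i.

Definition enorm (R : realType) (n : nat) (x : 'rV[R]_n) : R :=
  Num.sqrt (edot x x).

Definition eball (R : realType) (n : nat) (p : 'rV[R]_n) (r : R)
  : set 'rV[R]_n := [set x | enorm (x - p) < r].

Definition einterior (R : realType) (n : nat) (A : set 'rV[R]_n)
  : set 'rV[R]_n := [set x | exists2 e : R, 0 < e & eball x e `<=` A].

Definition affinely_independent (R : realType) (n m : nat)
  (V : 'I_m -> 'rV[R]_n) : Prop :=
  forall l : 'I_m -> R,
    \sum_(i < m) l i = 0 -> \sum_(i < m) l i *: V i = 0 -> forall i, l i = 0.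

Definition conv_of (R : realType) (n m : nat) (V : 'I_m -> 'rV[R]_n)
  (P : pred 'I_m) : set 'rV[R]_n :=
  [set x | exists l : 'I_m -> R,
     [/\ forall i, 0 <= l i, forall i, ~~ P i -> l i = 0,
         \sum_(i < m) l i = 1 & x = \sum_(i < m) l i *: V i]].

Definition simplex (R : realType) (n m : nat) (V : 'I_m -> 'rV[R]_n)
  : set 'rV[R]_n := conv_of V predT.

Definition facet (R : realType) (n m : nat) (V : 'I_m -> 'rV[R]_n) (j : 'I_m)
  : set 'rV[R]_n := conv_of V (predC1 j).

Definition hyperplane (R : realType) (n : nat) (a : 'rV[R]_n) (b : R)
  : set 'rV[R]_n := [set x | edot a x = b].
Definition halfspace_ge (R : realType) (n : nat) (a : 'rV[R]_n) (b : R)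
  : set 'rV[R]_n := [set x | b <= edot a x].
Definition halfspace_le (R : realType) (n : nat) (a : 'rV[R]_n) (b : R)
  : set 'rV[R]_n := [set x | edot a x <= b].

(** Let [l] be the barycentric coordinates of [u] and let [v] be the central
   projection of [u] from the vertex [V j] onto the opposite facet, i.e. the
   point with coordinates [l i / (1 - l j)] for [i != j] and [0] at [j].
   Translating the ball [B(u, 1/r)], which lies in the simplex, by [v - u]
   adds to the coordinates of each point [l i / (1 - l j) - l i >= 0] for
   [i != j], so the translated ball [B(v, 1/r)] has nonnegative coordinates
   off [j]; its coordinate at [j] is proportional to the height above [H],
   which gives both inclusions for [B(v, 1/r)].  Finally [F] and [v] lie in
   [S' ⊂ B(u, r)], so [F ⊂ B(v, 2r)]. *)
From HB Require Import structures.
From mathcomp Require Import all_boot all_order all_algebra.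
From mathcomp Require Import boolp classical_sets reals.
From mathcomp Require Import ring lra.
Import Order.TTheory GRing.Theory Num.Theory.
Local Open Scope ring_scope.
Local Open Scope classical_set_scope.

Section EuclideanSpace.
Context {R : realType} {n : nat}.
Implicit Types (x y z u a : 'rV[R]_n) (r t : R).

Lemma edotDr x y z : edot x (y + z) = edot x y + edot x z.
Proof. by rewrite /edot -big_split; apply: eq_bigr => i _; rewrite mxE mulrDr. Qed.

Lemma edotZr x y t : edot x (t *: y) = t * edot x y.
Proof. by rewrite /edot mulr_sumr; apply: eq_bigr => i _; rewrite mxE mulrCA. Qed.

Lemma edot_sumr m x (c : 'I_m -> R) (V : 'I_m -> 'rV[R]_n) :
  edot x (\sum_(i < m) c i *: V i) = \sum_(i < m) c i * edot x (V i).
Proof.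
rewrite /edot; under eq_bigr => k _ do rewrite summxE mulr_sumr.
rewrite exchange_big /=; apply: eq_bigr => i _; rewrite mulr_sumr.
by apply: eq_bigr => k _; rewrite mxE mulrCA.
Qed.

Lemma edotZZ x t : edot (t *: x) (t *: x) = t ^+ 2 * edot x x.
Proof. by rewrite /edot mulr_sumr; apply: eq_bigr => i _; rewrite !mxE; ring. Qed.

Lemma edot_ge0 x : 0 <= edot x x.
Proof. by apply: sumr_ge0 => i _; rewrite -expr2 sqr_ge0. Qed.

Lemma edot_gt0 x : x != 0 -> 0 < edot x x.
Proof.
move=> x0; rewrite lt0r edot_ge0 andbT; apply: contra x0.
rewrite psumr_eq0 => [/allP x_eq0|i _]; last by rewrite -expr2 sqr_ge0.
apply/eqP/rowP => k; rewrite mxE.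
by apply/eqP; rewrite -sqrf_eq0 expr2; exact: x_eq0 (mem_index_enum _).
Qed.

Lemma edot_sub_le x y : edot (x - y) (x - y) <= 2 * edot x x + 2 * edot y y.
Proof.
rewrite /edot !mulr_sumr -big_split /=; apply: ler_sum => i _.
by rewrite !mxE; have := sqr_ge0 (x ord0 i + y ord0 i); nra.
Qed.

Lemma enorm_lt_sqr x r : 0 < r -> (enorm x < r) = (edot x x < r ^+ 2).
Proof.
move=> r0; rewrite /enorm -{1}(gtr0_norm r0) -sqrtr_sqr ltr_sqrt //.
by rewrite exprn_gt0.
Qed.

Lemma eball_radius_gt0 {u r x} : eball u r x -> 0 < r.
Proof. exact/le_lt_trans/sqrtr_ge0. Qed.

Lemma eball_center u r : 0 < r -> eball u r u.
Proof.
move=> r0; rewrite /eball /= subrr enorm_lt_sqr // /edot big1 ?exprn_gt0 //.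
by move=> i _; rewrite mxE mul0r.
Qed.

Lemma eball_add_scale u a r : 0 < r -> eball u r (u + (r / (1 + edot a a)) *: a).
Proof.
move=> r0; have A_gt0 : 0 < 1 + edot a a by rewrite ltr_wpDr ?edot_ge0.
rewrite /eball /= addrC addKr enorm_lt_sqr // edotZZ expr_div_n mulrAC.
rewrite ltr_pdivrMr ?exprn_gt0 // ltr_pM2l ?exprn_gt0 // expr2.
by have := edot_ge0 a; nra.
Qed.

(* The parallelogram bound avoids proving the triangle inequality for [enorm]. *)
Lemma eball_diam {u r x y} : eball u r x -> eball u r y -> eball y (2 * r) x.
Proof.
move=> xu yu; have r0 : 0 < r by exact: eball_radius_gt0 xu.
move: xu yu; rewrite /eball /= !enorm_lt_sqr ?mulr_gt0 // => xu yu.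
have -> : x - y = (x - u) - (y - u) by rewrite opprB addrA subrK.
by apply: le_lt_trans (edot_sub_le _ _) _; lra.
Qed.

End EuclideanSpace.

(* The central projection from the vertex [V j] onto the opposite facet of
   the point with barycentric coordinates [l]. *)
Definition projection_coord {R : realType} {m} (j : 'I_m) (l : 'I_m -> R) i :=
  if i == j then 0 else l i / (1 - l j).

Definition facet_projection {R : realType} {n m} (V : 'I_m -> 'rV[R]_n) j l :=
  \sum_i projection_coord j l i *: V i.

Section Barycentric.
Context {R : realType} {n m : nat} {V : 'I_m -> 'rV[R]_n}.

Lemma conv_of_vertex (P : pred 'I_m) i : P i -> conv_of V P (V i).
Proof.
move=> Pi; exists (fun k => (k == i)%:R); split.
- by move=> k; rewrite ler0n.
- by move=> k; apply: contraNeq; rewrite pnatr_eq0 eqb0 negbK => /eqP ->.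
- by rewrite (bigD1 i) //= eqxx big1 ?addr0 // => k /negPf ->.
- rewrite (bigD1 i) //= eqxx scale1r big1 ?addr0 // => k /negPf ->.
  by rewrite scale0r.
Qed.

Lemma conv_of_sub_simplex (P : pred 'I_m) : conv_of V P `<=` simplex V.
Proof. by move=> x [l [l_ge0 _ l_sum ->]]; exists l. Qed.

Context {j : 'I_m} {a : 'rV[R]_n} {b : R}.

Lemma coord_le1 {c : 'I_m -> R} : (forall i, 0 <= c i) -> \sum_i c i = 1 -> c j <= 1.
Proof. by move=> c_ge0 <-; rewrite (bigD1 j) //= lerDl sumr_ge0. Qed.

Hypothesis facetH : facet V j `<=` hyperplane a b.

Let height := edot a (V j) - b.

Lemma edot_facet_vertex i : i != j -> edot a (V i) = b.
Proof. by move=> ij; apply/facetH/conv_of_vertex. Qed.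

Lemma edot_barycentric {c : 'I_m -> R} : \sum_i c i = 1 ->
  edot a (\sum_i c i *: V i) - b = c j * height.
Proof.
move=> c_sum; rewrite edot_sumr -[b]mul1r -c_sum mulr_suml -sumrB.
rewrite (bigD1 j) //= big1 ?addr0 ?mulrBr // => i ij.
by rewrite edot_facet_vertex // subrr.
Qed.

Context {rho : R} {u : 'rV[R]_n} {l : 'I_m -> R}.
Hypotheses (rho_gt0 : 0 < rho) (ballS : eball u rho `<=` simplex V).
Hypotheses (simplexH : simplex V `<=` halfspace_ge a b) (a_neq0 : a != 0).
Hypotheses (l_ge0 : forall i, 0 <= l i) (l_sum : \sum_i l i = 1).
Hypothesis u_bary : u = \sum_i l i *: V i.

(* Moving from [u] along the normal [a] inside the ball raises the height. *)
Lemma normal_step_gap : exists2 d : R, d <= 1 - l j & 0 < d * height.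
Proof.
have [c [c_ge0 _ c_sum c_bary]] := ballS _ (eball_add_scale u a _ rho_gt0).
exists (c j - l j); first by have := coord_le1 c_ge0 c_sum; lra.
rewrite mulrBl -(edot_barycentric c_sum) -(edot_barycentric l_sum).
rewrite -c_bary -u_bary edotDr edotZr.
suff : 0 < rho / (1 + edot a a) * edot a a by lra.
by rewrite mulr_gt0 ?edot_gt0 // divr_gt0 // ltr_wpDr ?edot_ge0.
Qed.

Lemma height_gt0 : 0 < height.
Proof.
have height_ge0 : 0 <= height.
  by rewrite subr_ge0; apply/simplexH/conv_of_vertex.
have [d _ d_height_gt0] := normal_step_gap; rewrite lt0r height_ge0 andbT.
by apply: contraTneq d_height_gt0 => ->; rewrite mulr0 ltxx.
Qed.

Lemma apex_coord_lt1 : l j < 1.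
Proof.
have [d d_le] := normal_step_gap; rewrite pmulr_lgt0 ?height_gt0 //; lra.
Qed.

Lemma projection_coord_ge0 i : 0 <= projection_coord j l i.
Proof.
rewrite /projection_coord; case: eqP => // _.
by rewrite divr_ge0 // subr_ge0 ltW ?apex_coord_lt1.
Qed.

Lemma projection_coord_sum : \sum_i projection_coord j l i = 1.
Proof.
have lj_neq1 : 1 - l j != 0 by rewrite subr_eq0 eq_sym lt_eqF ?apex_coord_lt1.
rewrite (bigD1 j) //= {1}/projection_coord eqxx add0r -(divff lj_neq1).
have lj_sum : 1 - l j = \sum_(i | i != j) l i.
  by rewrite -l_sum (bigD1 j) //= addrC addrK.
rewrite {1}lj_sum mulr_suml.
by apply: eq_bigr => i /negPf ij; rewrite /projection_coord ij.
Qed.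

Lemma facet_projection_in : facet V j (facet_projection V j l).
Proof.
exists (projection_coord j l); split.
- exact: projection_coord_ge0.
- by move=> i; rewrite negbK /projection_coord => ->.
- exact: projection_coord_sum.
- by [].
Qed.

(* Translating [x] by [u - v] lands in [B(u, rho)]; adding the coordinates
   of [v - u] back only increases the coordinates off [j]. *)
Lemma projection_ball_coords x : eball (facet_projection V j l) rho x ->
  exists c : 'I_m -> R,
    [/\ forall i, i != j -> 0 <= c i, \sum_i c i = 1 & x = \sum_i c i *: V i].
Proof.
move=> xv; set v := facet_projection V j l.
have xu : eball u rho (u + (x - v)) by rewrite /eball /= addrC addKr.
have [c [c_ge0 _ c_sum c_bary]] := ballS _ xu.
exists (fun i => projection_coord j l i + c i - l i); split.
- move=> i /negPf ij; rewrite /projection_coord ij.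
  have lj_gt0 : 0 < 1 - l j by rewrite subr_gt0 apex_coord_lt1.
  suff : l i <= l i / (1 - l j) by have := c_ge0 i; lra.
  by rewrite ler_pdivlMr //; have := l_ge0 i; have := l_ge0 j; nra.
- by rewrite sumrB big_split /= projection_coord_sum c_sum l_sum addrK.
- under eq_bigr => i _ do rewrite scalerBl scalerDl.
  rewrite sumrB big_split /= -c_bary -u_bary -/v [u + _]addrC addrA addrK.
  by rewrite addrC subrK.
Qed.

Lemma projection_ball_halfspace :
  eball (facet_projection V j l) rho `&` halfspace_ge a b `<=` simplex V.
Proof.
move=> x [/projection_ball_coords [c [c_ge0 c_sum x_bary]] xH].
exists c; split=> // i; have [->|/c_ge0 //] := eqVneq i j.
by rewrite -(pmulr_lge0 _ height_gt0) -edot_barycentric // -x_bary subr_ge0.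
Qed.

Lemma projection_ball_hyperplane :
  eball (facet_projection V j l) rho `&` hyperplane a b `<=` facet V j.
Proof.
move=> x [/projection_ball_coords [c [c_ge0 c_sum x_bary]] xH].
have cj0 : c j = 0.
  have := edot_barycentric c_sum; rewrite -x_bary xH subrr => /esym/eqP.
  by rewrite mulf_eq0 (gt_eqF height_gt0) orbF => /eqP.
exists c; split=> // i; last by rewrite negbK => /eqP ->.
by have [->|/c_ge0 //] := eqVneq i j; rewrite cj0.
Qed.

Lemma facet_projection_spec : let v := facet_projection V j l in
  [/\ facet V j v, eball v rho `&` halfspace_ge a b `<=` simplex V
     & eball v rho `&` hyperplane a b `<=` facet V j].
Proof.
by split; [exact: facet_projection_in | exact: projection_ball_halfspace
          | exact: projection_ball_hyperplane].
Qed.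

End Barycentric.

Theorem mainTheorem11 (R : realType) (n : nat) (r : R) (V : 'I_n.+1 -> 'rV[R]_n)
  (u : 'rV[R]_n) (j : 'I_n.+1) (a : 'rV[R]_n) (b : R) :
  1 < r ->
  affinely_independent V ->
  eball u r^-1 `<=` simplex V ->
  simplex V `<=` eball u r ->
  a != 0 ->
  facet V j `<=` hyperplane a b ->
  simplex V `<=` halfspace_ge a b ->
  halfspace_le a b `&` einterior (simplex V) = set0 ->
  exists2 v, facet V j v &
    [/\ eball v r^-1 `&` halfspace_ge a b `<=` simplex V,
        eball v r^-1 `&` hyperplane a b `<=` facet V j
      & facet V j `<=` eball v (2 * r) `&` hyperplane a b].
Proof.
move=> r_gt1 _ ballS Sball a_neq0 facetH simplexH _.
have rho_gt0 : 0 < r^-1 by rewrite invr_gt0; lra.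
have [l [l_ge0 _ l_sum u_bary]] := ballS u (eball_center u _ rho_gt0).
have [vF ballH ballF] :=
  facet_projection_spec facetH rho_gt0 ballS simplexH a_neq0 l_ge0 l_sum u_bary.
exists (facet_projection V j l) => //; split=> // x xF.
split; last exact: facetH.
by apply: (eball_diam (Sball x _) (Sball _ _)); apply: conv_of_sub_simplex;
  [exact: xF | exact: vF].
Qed.
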